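(* Let $n\in\{2,6,10,\dots\}$ and let $P$ be a maximal increasing path of $f_{n+4}$ starting at the origin of $\{0,1\}^{n+4}$. Write vertices as $(\mathbf{x},y_1,y_2,y_3,y_4)$ with $\mathbf{x}\in\{0,1\}^n$, and let $\mathbf{0},\mathbf{1}\in\{0,1\}^n$ be the all-zeros and all-ones vectors. Then $P$ consists, in order, of: (i) an initial segment contained in $\{(\mathbf{x},0,0,0,0)\}$ whose projection to the first $n$ coordinates is an increasing path of $f_n$ from $\mathbf{0}$ to $\mathbf{1}$; (ii) the vertices $(\mathbf{1},1,0,0,0)$ and then $(\mathbf{1},1,1,0,0)$; (iii) $n$ steps, each changing one of the first $n$ coordinates from $1$ to $0$, ending at $(\mathbf{0},1,1,0,0)$; (iv) the vertices $(\mathbf{0},1,1,1,0)$ and then $(\mathbf{0},1,1,1,1)$; (v) a final segment contained in $\{(\mathbf{x},1,1,1,1)\}$ whose projection to the first $n$ coordinates is a maximal increasing path of $f_n$ starting at $\mathbf{0}$ (and hence, by induction, ending at $\mathbf{1}$).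
   Context: For $n\in\{2,6,10,\dots\}$ define polynomials $f_n$ in variables $x_1,\dots,x_n$ (evaluated on $\{0,1\}^n$) recursively. Set $f_2(x_1,x_2):=x_1+x_2$. For $n\in\{2,6,10,\dots\}$, write $\mathbf{x}=(x_1,\dots,x_n)$, $S:=\sum_{i=1}^n x_i$, let $M_n:=\max_{\{0,1\}^n} f_n-\min_{\{0,1\}^n} f_n+1$, and define $f_{n+4}(\mathbf{x},x_{n+1},x_{n+2},x_{n+3},x_{n+4}) := f_n(\mathbf{x}) - M_n n^2 x_{n+1} + M_n(n+1) S x_{n+1} - x_{n+2} - 2M_n n S x_{n+2} + 2M_n n(n+2) x_{n+1}x_{n+2} - 4 S x_{n+3} + 2x_{n+1}x_{n+3} + 2x_{n+2}x_{n+3} - 3x_{n+3} + (M_n(n-1)+4) S x_{n+4} + 6M_n n^2 x_{n+3}x_{n+4} - 5M_n n^2 x_{n+4}$. For a function $f:\{0,1\}^m\to\mathbb{R}$, an increasing path is a sequence of vertices $v_0,\dots,v_k$ of $\{0,1\}^m$ such that consecutive vertices differ in exactly one coordinate and $f(v_{j+1})>f(v_j)$ for all $j$. It is maximal if its last vertex is a local maximum (no neighbor has strictly larger value). *)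

From mathcomp Require Import all_boot all_order all_algebra.
Set Implicit Arguments. Unset Strict Implicit. Unset Printing Implicit Defensive.
Import Order.TTheory GRing.Theory Num.Theory.

(* Vertices of the cube {0,1}^m are boolean lists of length m;
   coordinate x_{i+1} (1-based in the paper) is [nth false x i]. *)

Local Open Scope ring_scope.

Definition b2i (b : bool) : int := (nat_of_bool b)%:Z.

Fixpoint allvecs (n : nat) : seq (seq bool) :=
  match n with
  | 0%N => [:: [::]]
  | n'.+1 => [seq b :: v | b <- [:: false; true], v <- allvecs n']
  end.

Definition maxl (s : seq int) : int := foldr Num.max (head 0 s) s.
Definition minl (s : seq int) : int := foldr Num.min (head 0 s) s.

Definition cubedim (k : nat) : nat := (4 * k + 2)%N.

(* fpoly k = f_{4k+2}, evaluated on a boolean list (only the first 4k+2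
   coordinates are read). *)
Fixpoint fpoly (k : nat) (x : seq bool) : int :=
  match k with
  | 0%N => b2i (nth false x 0) + b2i (nth false x 1)
  | k'.+1 =>
    let n := cubedim k' in
    let vals := [seq fpoly k' v | v <- allvecs n] in
    let M := maxl vals - minl vals + 1 in
    let S := \sum_(i < n) b2i (nth false x i) in
    let y1 := b2i (nth false x n) in
    let y2 := b2i (nth false x n.+1) in
    let y3 := b2i (nth false x n.+2) in
    let y4 := b2i (nth false x n.+3) in
    let nz : int := n%:Z in
    fpoly k' x
    - M * nz ^+ 2 * y1
    + M * (nz + 1) * S * y1
    - y2
    - 2 * M * nz * S * y2
    + 2 * M * nz * (nz + 2) * y1 * y2
    - 4 * S * y3
    + 2 * y1 * y3
    + 2 * y2 * y3
    - 3 * y3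
    + (M * (nz - 1) + 4) * S * y4
    + 6 * M * nz ^+ 2 * y3 * y4
    - 5 * M * nz ^+ 2 * y4
  end.

Definition hamming (u v : seq bool) : nat :=
  count id [seq p.1 != p.2 | p <- zip u v].

Definition adjacent (u v : seq bool) : bool :=
  (size u == size v) && (hamming u v == 1%N).

Definition is_incr_path (m : nat) (g : seq bool -> int) (p : seq (seq bool)) : Prop :=
  [/\ p != [::], all (fun v => size v == m) p
    & sorted (fun u v => adjacent u v && (g u < g v)) p].

Definition is_local_max (m : nat) (g : seq bool -> int) (v : seq bool) : Prop :=
  forall w, size w = m -> adjacent v w -> g w <= g v.

Definition is_maximal_incr_path (m : nat) (g : seq bool -> int) (p : seq (seq bool)) : Prop :=
  is_incr_path m g p /\ is_local_max m g (last [::] p).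

Definition step_down (n : nat) (a b : seq bool) : bool :=
  [exists i : 'I_n, nth false a i && (b == set_nth false a i false)].

Definition zeros (n : nat) : seq bool := nseq n false.
Definition ones (n : nat) : seq bool := nseq n true.

From mathcomp Require Import all_boot all_order all_algebra zify ring.
Set Implicit Arguments. Unset Strict Implicit. Unset Printing Implicit Defensive.
Import Order.TTheory GRing.Theory Num.Theory.
Local Open Scope ring_scope.

(* Write a vertex of {0,1}^(n+4) as x ++ y with y in {0,1}^4.  Then
   f_{n+4}(x ++ y) = f_n(x) + L(|x|, y), where |x| is the number of ones of x
   and L = [layer] collects the terms of the recursion involving y.  The
   constant M exceeds the oscillation of f_n, and every move of y, as well as
   every move of x in a face where L depends on |x|, changes L by a multiple of
   M that outweighs any change of f_n.  So an increasing path from the origin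
   first follows an increasing path of f_n in the face y = 0000 up to x = 1 (by
   induction, the only place where a maximal path of f_n from 0 can stop),
   where the only way up is y = 1000 and then y = 1100.  In that face each step
   must switch off a one of x, gaining M (n - 1) in L, until x = 0; then y
   becomes 1110 and 1111, a face on which L no longer depends on x, so the path
   ends as a maximal increasing path of f_n from 0. *)

Lemma b2iT : b2i true = 1. Proof. by []. Qed.
Lemma b2iF : b2i false = 0. Proof. by []. Qed.

Lemma sum_b2i_nth (x : seq bool) :
  \sum_(i < size x) b2i (nth false x i) = (count id x)%:Z.
Proof.
elim: x => [|a x IH]; first by rewrite big_ord0.
by rewrite big_ord_recl /= IH /b2i; case: a => /=; lia.
Qed.

Lemma hamming_cons a b u v : hamming (a :: u) (b :: v) = ((a != b) + hamming u v)%N.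
Proof. by []. Qed.

Lemma hamming_cat u v w z : size u = size w ->
  hamming (u ++ v) (w ++ z) = (hamming u w + hamming v z)%N.
Proof. by move=> h; rewrite /hamming zip_cat // map_cat count_cat. Qed.

Lemma hamming_refl u : hamming u u = 0%N.
Proof. by elim: u => // a u IH; rewrite hamming_cons eqxx. Qed.

Lemma hamming_eq0 u v : size u = size v -> hamming u v = 0%N -> u = v.
Proof.
elim: u v => [|a u IH] [|b v] //= [hs]; rewrite hamming_cons.
by case: eqP => [->|] //= h; rewrite (IH v).
Qed.

Lemma hamming_eq1 u v : size u = size v -> hamming u v = 1%N ->
  exists2 i, (i < size u)%N & v = set_nth false u i (~~ nth false u i).
Proof.
elim: u v => [|a u IH] [|b v] //= [hs]; rewrite hamming_cons.
case: eqP => [->|nab] /= h.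
  by have [i hi ->] := IH v hs h; exists i.+1.
exists 0%N => //=; rewrite (hamming_eq0 hs) //; last by lia.
by case: a b nab => [] [].
Qed.

Lemma hamming_set_nth u i : (i < size u)%N ->
  hamming u (set_nth false u i (~~ nth false u i)) = 1%N.
Proof.
elim: u i => [|a u IH] [|i] //= hi; rewrite hamming_cons.
  by case: a; rewrite /= hamming_refl.
by rewrite eqxx IH.
Qed.

Lemma adjacent_catl x w y : size x = size w -> hamming x w = 1%N ->
  adjacent (x ++ y) (w ++ y).
Proof.
by move=> hs hh; rewrite /adjacent !size_cat hs hamming_cat // hh hamming_refl ?addn0 ?add0n !eqxx.
Qed.

Lemma adjacent_catr x y z : size y = size z -> hamming y z = 1%N ->
  adjacent (x ++ y) (x ++ z).
Proof.
by move=> hs hh; rewrite /adjacent !size_cat hs hamming_cat // hh hamming_refl ?addn0 ?add0n !eqxx.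
Qed.

Lemma adjacent_cat4 n x y v : size x = n -> size y = 4%N -> adjacent (x ++ y) v ->
  exists w a b c d, [/\ v = w ++ [:: a; b; c; d], size w = n &
    (w = x /\ hamming y [:: a; b; c; d] = 1%N) \/
    ([:: a; b; c; d] = y /\ hamming x w = 1%N)].
Proof.
move=> hx hy /andP [/eqP hs /eqP hh]; rewrite size_cat hx hy in hs.
have hw : size (take n v) = n by rewrite size_take -hs; case: ltnP => //; lia.
have hd : size (drop n v) = 4%N by rewrite size_drop -hs; lia.
rewrite -(cat_take_drop n v) in hh *.
move: hd hh; case: (drop n v) => [|a [|b [|c [|d [|]]]]] //= _.
rewrite hamming_cat ?hw // => hh; exists (take n v), a, b, c, d; split => //.
case h1: (hamming x (take n v)) hh => [|m] hh.
  by left; rewrite (hamming_eq0 _ h1) // hw.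
by right; split; [apply: esym; apply: hamming_eq0; [rewrite hy | lia] | lia].
Qed.

Lemma count_set_nth (x : seq bool) i c : (i < size x)%N ->
  (count id (set_nth false x i c))%:Z = (count id x)%:Z - b2i (nth false x i) + b2i c.
Proof.
elim: x i => [|a x IH] [|i] //= hi; last by have := IH i hi; rewrite /b2i; lia.
by rewrite /b2i; case: a; case: (c) => /=; lia.
Qed.

Lemma count_flip (x w : seq bool) : size x = size w -> hamming x w = 1%N ->
  exists2 i, (i < size x)%N & w = set_nth false x i (~~ nth false x i) /\
  (count id w)%:Z = (count id x)%:Z + (if nth false x i then -1 else 1).
Proof.
move=> hs hh; have [i hi hw] := hamming_eq1 hs hh; exists i => //; split => //.
by rewrite hw count_set_nth //; case: (nth false x i); rewrite /= ?b2iT ?b2iF; lia.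
Qed.

Lemma count_eq0_nseq (x : seq bool) : count id x = 0%N -> x = nseq (size x) false.
Proof. by elim: x => [|[] x IH] //= h; rewrite -IH. Qed.

Lemma count_eq_size_nseq (x : seq bool) : count id x = size x -> x = nseq (size x) true.
Proof.
elim: x => [|[] x IH] //= h; first by rewrite -IH //; lia.
by have := count_size id x; lia.
Qed.

Lemma size_ones n : size (ones n) = n. Proof. exact: size_nseq. Qed.
Lemma size_zeros n : size (zeros n) = n. Proof. exact: size_nseq. Qed.
Lemma count_ones n : count id (ones n) = n. Proof. by rewrite /ones count_nseq mul1n. Qed.
Lemma count_zeros n : count id (zeros n) = 0%N. Proof. by rewrite /zeros count_nseq mul0n. Qed.
Lemma nth_ones n i : (i < n)%N -> nth false (ones n) i.
Proof. by move=> hi; rewrite /ones nth_nseq hi. Qed.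
Lemma nth_zeros n i : nth false (zeros n) i = false.
Proof. by rewrite /zeros nth_nseq; case: ifP. Qed.

Lemma foldr_max_ge (s : seq int) d a : a \in s -> a <= foldr Num.max d s.
Proof.
elim: s => [|b s IH] //=; rewrite in_cons le_max => /orP [/eqP ->|/IH ->];
  by rewrite ?lexx ?orbT.
Qed.

Lemma foldr_min_le (s : seq int) d a : a \in s -> foldr Num.min d s <= a.
Proof.
elim: s => [|b s IH] //=; rewrite in_cons ge_min => /orP [/eqP ->|/IH ->];
  by rewrite ?lexx ?orbT.
Qed.

Lemma mem_allvecs n (x : seq bool) : size x = n -> x \in allvecs n.
Proof.
elim: n x => [|n IH] [|a x] //= [/IH h].
by rewrite cats0 mem_cat; apply/orP; case: a; [right|left]; apply/mapP; exists x.
Qed.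

Definition spread k : int :=
  let vals := [seq fpoly k v | v <- allvecs (cubedim k)] in maxl vals - minl vals + 1.

Definition layer (M nz S : int) (y : seq bool) : int :=
  let y1 := b2i (nth false y 0) in let y2 := b2i (nth false y 1) in
  let y3 := b2i (nth false y 2) in let y4 := b2i (nth false y 3) in
    - M * nz ^+ 2 * y1
    + M * (nz + 1) * S * y1
    - y2
    - 2 * M * nz * S * y2
    + 2 * M * nz * (nz + 2) * y1 * y2
    - 4 * S * y3
    + 2 * y1 * y3
    + 2 * y2 * y3
    - 3 * y3
    + (M * (nz - 1) + 4) * S * y4
    + 6 * M * nz ^+ 2 * y3 * y4
    - 5 * M * nz ^+ 2 * y4.

Lemma fpolyS k x : fpoly k.+1 x = fpoly k x +
  layer (spread k) (cubedim k)%:Z (\sum_(i < cubedim k) b2i (nth false x i))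
        (drop (cubedim k) x).
Proof. by rewrite /layer !nth_drop addn0 addn1 addn2 addn3 /spread; cbn [fpoly]; ring. Qed.

Lemma cubedimS k : cubedim k.+1 = (cubedim k + 4)%N.
Proof. by rewrite /cubedim; lia. Qed.

Lemma layer_take M nz S y : layer M nz S (take 4 y) = layer M nz S y.
Proof. by rewrite /layer !nth_take. Qed.

Lemma fpoly_take k x : fpoly k (take (cubedim k) x) = fpoly k x.
Proof.
elim: k x => [|k IH] x; first by rewrite /= !nth_take.
rewrite !fpolyS cubedimS -{1}IH take_takel ?leq_addr // IH.
rewrite (addnC (cubedim k)) -take_drop layer_take.
by rewrite (eq_bigr (fun i : 'I__ => b2i (nth false x i))) // => i _;
  rewrite nth_take // ltn_addl.
Qed.

Lemma fpoly_cat k x y : size x = cubedim k ->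
  fpoly k.+1 (x ++ y) = fpoly k x + layer (spread k) (cubedim k)%:Z (count id x)%:Z y.
Proof.
move=> hx; rewrite fpolyS -fpoly_take -hx take_size_cat // drop_size_cat //.
by rewrite -sum_b2i_nth (eq_bigr (fun i : 'I__ => b2i (nth false x i))) // => i _;
  rewrite nth_cat ltn_ord.
Qed.

Lemma fpoly_oscillation k x w : size x = cubedim k -> size w = cubedim k ->
  fpoly k w - fpoly k x <= spread k - 1.
Proof.
have bounds v : size v = cubedim k ->
    minl [seq fpoly k v | v <- allvecs (cubedim k)] <= fpoly k v
    <= maxl [seq fpoly k v | v <- allvecs (cubedim k)].
  move=> hv; have hin : fpoly k v \in [seq fpoly k v | v <- allvecs (cubedim k)].
    by apply: map_f; exact: mem_allvecs.
  by rewrite (foldr_min_le _ hin) (foldr_max_ge _ hin).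
by move=> /bounds hx /bounds hw; rewrite /spread; lia.
Qed.

Lemma spread_ge1 k : 1 <= spread k.
Proof. by have := @fpoly_oscillation k _ _ (size_zeros _) (size_zeros _); lia. Qed.

Lemma cubedim_ge2 k : 2 <= (cubedim k)%:Z.
Proof. by rewrite /cubedim; lia. Qed.

Notation Y0 := [:: false; false; false; false].
Notation Y1 := [:: true; false; false; false].
Notation Y2 := [:: true; true; false; false].
Notation Y3 := [:: true; true; true; false].
Notation Y4 := [:: true; true; true; true].

Lemma zeros_cat4 n : zeros (n + 4) = zeros n ++ Y0.
Proof. by rewrite /zeros nseqD. Qed.

Lemma ones_cat4 n : ones (n + 4) = ones n ++ Y4.
Proof. by rewrite /ones nseqD. Qed.

Definition slope (M nz : int) (y : seq bool) : int :=
  M * (nz + 1) * b2i (nth false y 0) - 2 * M * nz * b2i (nth false y 1)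
  - 4 * b2i (nth false y 2) + (M * (nz - 1) + 4) * b2i (nth false y 3).

Lemma layer_shiftS M nz S S' y :
  layer M nz S' y = layer M nz S y + (S' - S) * slope M nz y.
Proof. by rewrite /layer /slope; ring. Qed.

Lemma layer_flat M nz S S' y : slope M nz y = 0 -> layer M nz S y = layer M nz S' y.
Proof. by move=> h; rewrite (layer_shiftS _ _ S') h mulr0 addr0. Qed.

Lemma slopeY0 M nz : slope M nz Y0 = 0. Proof. by rewrite /slope /= b2iF; ring. Qed.
Lemma slopeY4 M nz : slope M nz Y4 = 0. Proof. by rewrite /slope /= b2iT; ring. Qed.

Ltac layer_simpl := rewrite /layer /slope /= ?b2iT ?b2iF ?expr2
  ?(mulr0, mul0r, mulr1, mul1r, addr0, add0r, subr0, sub0r).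

Section LayerSteps.

Variables (M nz : int).
Hypotheses (hM : 1 <= M) (hnz : 2 <= nz).

Lemma layerY0_ascent S y : 0 <= S <= nz -> hamming Y0 y = 1%N -> size y = 4%N ->
  layer M nz S Y0 < layer M nz S y -> y = Y1 /\ S = nz.
Proof.
move=> /andP [hS0 hSn]; case: y => [|a [|b [|c [|d [|]]]]] //.
case: a; case: b; case: c; case: d => //= _ _; layer_simpl.
- move=> h; split => //; apply/eqP; rewrite eq_le hSn /= leNgt; apply/negP => hlt.
  have : 0 <= M * (nz + 1) * (nz - 1 - S) by rewrite !mulr_ge0 //; lia.
  nia.
- nia.
- nia.
- have : 0 <= M * (nz - 1) * (nz - S) by rewrite !mulr_ge0 //; lia.
  nia.
Qed.

Lemma layerY0_lt_Y1 S : layer M nz S Y0 < layer M nz nz Y1.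
Proof. by layer_simpl; nia. Qed.

Lemma layerY1_ascent y : hamming Y1 y = 1%N -> size y = 4%N ->
  layer M nz nz Y1 < layer M nz nz y -> y = Y2.
Proof.
by case: y => [|a [|b [|c [|d [|]]]]] //; case: a; case: b; case: c; case: d => //= _ _;
  layer_simpl; nia.
Qed.

Lemma layerY1_lt_Y2 : layer M nz nz Y1 < layer M nz nz Y2.
Proof. by layer_simpl; nia. Qed.

Lemma layerY2_ascent S y : 0 <= S <= nz -> hamming Y2 y = 1%N -> size y = 4%N ->
  layer M nz S Y2 < layer M nz S y -> y = Y3 /\ S = 0.
Proof.
move=> /andP [hS0 hSn].
have : 0 <= M * (nz - 1) * (nz - S) by rewrite !mulr_ge0 //; lia.
have : 0 <= M * nz * (nz - S) by rewrite !mulr_ge0 //; lia.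
case: y => [|a [|b [|c [|d [|]]]]] //.
case: a; case: b; case: c; case: d => //= _ _ _ _; layer_simpl;
  [by move=> h; split => //; lia | nia..].
Qed.

Lemma layerY2_lt_Y3 : layer M nz 0 Y2 < layer M nz 0 Y3.
Proof. by layer_simpl; nia. Qed.

Lemma layerY3_ascent y : hamming Y3 y = 1%N -> size y = 4%N ->
  layer M nz 0 Y3 < layer M nz 0 y -> y = Y4.
Proof.
by case: y => [|a [|b [|c [|d [|]]]]] //; case: a; case: b; case: c; case: d => //= _ _;
  layer_simpl; nia.
Qed.

Lemma layerY3_lt_Y4 : layer M nz 0 Y3 < layer M nz 0 Y4.
Proof. by layer_simpl; nia. Qed.

Lemma layerY4_no_ascent S y : 0 <= S <= nz -> hamming Y4 y = 1%N -> size y = 4%N ->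
  layer M nz S y <= layer M nz S Y4.
Proof.
move=> /andP [hS0 hSn].
have : 0 <= M * (nz + 1) * (nz - S) by rewrite !mulr_ge0 //; lia.
have : 0 <= M * nz * (nz - S) by rewrite !mulr_ge0 //; lia.
by case: y => [|a [|b [|c [|d [|]]]]] //; case: a; case: b; case: c; case: d => //= _ _ _ _;
  layer_simpl; nia.
Qed.

End LayerSteps.

Definition ascent (g : seq bool -> int) (u v : seq bool) : bool :=
  adjacent u v && (g u < g v).

Definition maximal_ascent (m : nat) (g : seq bool -> int) (v : seq bool) p : Prop :=
  path (ascent g) v p /\ is_local_max m g (last v p).

Lemma path_ascent_size g a p : path (ascent g) a p -> all (fun v => size v == size a) p.
Proof.
elim: p a => [|b p IH] a //= /andP [/andP [/andP [/eqP hs _] _] hp].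
by rewrite hs eqxx IH.
Qed.

Lemma is_incr_path_cons m g a p : size a = m -> path (ascent g) a p ->
  is_incr_path m g (a :: p).
Proof. by move=> <- hp; split=> //=; rewrite eqxx (path_ascent_size hp). Qed.

Definition ends_at_ones k : Prop :=
  forall p, is_maximal_incr_path (cubedim k) (fpoly k) p ->
  head [::] p = zeros (cubedim k) -> last [::] p = ones (cubedim k).

Section Phases.

Variable k : nat.
Local Notation n := (cubedim k).
Local Notation M := (spread k).
Local Notation f := (fpoly k).
Local Notation F := (fpoly k.+1).

Let hM : 1 <= M := spread_ge1 k.
Let hn : 2 <= n%:Z := cubedim_ge2 k.

Lemma count_range x : size x = n -> 0 <= (count id x)%:Z <= n%:Z.
Proof. by move=> <-; have := count_size id x; lia. Qed.

Lemma local_max_face x y : size x = n -> size y = 4%N -> slope M n y = 0 ->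
  is_local_max (n + 4) F (x ++ y) -> is_local_max n f x.
Proof.
move=> hx hy hs hlm w hw /andP [/eqP hxw /eqP hh].
have := hlm (w ++ y); rewrite !fpoly_cat // (layer_flat _ (count id x)%:Z hs) lerD2r.
by apply; [rewrite size_cat hw hy | apply: adjacent_catl].
Qed.

Lemma local_max_layer x y z : size x = n -> size y = 4%N -> size z = 4%N ->
  hamming y z = 1%N -> is_local_max (n + 4) F (x ++ y) ->
  layer M n (count id x)%:Z z <= layer M n (count id x)%:Z y.
Proof.
move=> hx hy hz hh hlm; have := hlm (x ++ z); rewrite !fpoly_cat // lerD2l.
by apply; [rewrite size_cat hx hz | apply: adjacent_catr; rewrite ?hy ?hz].
Qed.

Lemma ones_Y1_not_local_max : ~ is_local_max (n + 4) F (ones n ++ Y1).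
Proof.
move=> /(@local_max_layer _ Y1 Y2 (size_ones n) erefl erefl erefl).
by rewrite count_ones leNgt layerY1_lt_Y2.
Qed.

Lemma zeros_Y3_not_local_max : ~ is_local_max (n + 4) F (zeros n ++ Y3).
Proof.
move=> /(@local_max_layer _ Y3 Y4 (size_zeros n) erefl erefl erefl).
by rewrite count_zeros leNgt layerY3_lt_Y4.
Qed.

Lemma Y2_not_local_max x : size x = n -> ~ is_local_max (n + 4) F (x ++ Y2).
Proof.
move=> hx hlm; case: (boolP (has id x)) => [hhas|].
  have hi : (find id x < size x)%N by rewrite -has_find.
  set w := set_nth false x (find id x) (~~ nth false x (find id x)).
  have hw : size w = n by rewrite size_set_nth -hx; apply/maxn_idPr.
  have := hlm (w ++ Y2); rewrite size_cat hw => /(_ erefl).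
  rewrite adjacent_catl ?hw ?hamming_set_nth // => /(_ erefl).
  rewrite !fpoly_cat // (layer_shiftS _ _ (count id x)%:Z) count_set_nth //.
  rewrite (nth_find false hhas) /slope /= b2iT b2iF.
  by have := fpoly_oscillation hw hx; nia.
rewrite has_count -leqNgt leqn0 => /eqP /count_eq0_nseq; rewrite hx => x0.
move: hlm; rewrite x0 => /(@local_max_layer _ Y2 Y3 (size_zeros n) erefl erefl erefl).
by rewrite count_zeros leNgt layerY2_lt_Y3.
Qed.

(* [p0] is the part of the path already traversed in the face Y0: it is needed to
   invoke [ends_at_ones k] if the path stops in that face. *)
Lemma ascent_from_Y0 p0 x rest : ends_at_ones k ->
  path (ascent f) (zeros n) p0 -> last (zeros n) p0 = x -> size x = n ->
  maximal_ascent (n + 4) F (x ++ Y0) rest ->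
  exists Q B, [/\ rest = [seq v ++ Y0 | v <- Q] ++ (ones n ++ Y1) :: B,
    path (ascent f) x Q, last x Q = ones n & maximal_ascent (n + 4) F (ones n ++ Y1) B].
Proof.
move=> ends; elim: rest p0 x => [|v rest IH] p0 x hp0 hl hx [hp hlm].
  have xo : x = ones n.
    rewrite -hl; apply: (ends (zeros n :: p0)) => //; split.
      exact: is_incr_path_cons (size_zeros n) hp0.
    by rewrite /= hl; exact: (@local_max_face x Y0 hx erefl (slopeY0 _ _) hlm).
  move: hlm => /(@local_max_layer _ Y0 Y1 hx erefl erefl erefl).
  by rewrite xo count_ones leNgt layerY0_lt_Y1.
move: hp => /andP [/andP [hadj hlt] hp]; rewrite last_cons in hlm.
have [w [a [b [c [d [hv hw [[wx hy] | [hyx hxw]]]]]]]] := @adjacent_cat4 _ x Y0 _ hx erefl hadj.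
  move: hlt; rewrite hv wx !fpoly_cat // ltrD2l => hlt.
  have [hy1 hS] := layerY0_ascent hM hn (count_range hx) hy erefl hlt.
  have : count id x = size x by lia.
  move/count_eq_size_nseq; rewrite hx -/(ones n) => xo.
  by exists [::], rest; rewrite -xo -hy1 -wx -hv.
move: hv hlt; rewrite hyx => hv; rewrite hv !fpoly_cat // !(layer_flat _ 0 (slopeY0 _ _)).
rewrite ltrD2r => hlt.
have hxw' : ascent f x w by rewrite /ascent hlt andbT /adjacent hx hw hxw !eqxx.
have hpw : path (ascent f) (zeros n) (rcons p0 w) by rewrite rcons_path hp0 hl hxw'.
have hmw : maximal_ascent (n + 4) F (w ++ Y0) rest by split; rewrite -hv.
have [Q [B [hrest hQ hlQ hB]]] := IH _ _ hpw (last_rcons _ _ _) hw hmw.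
by exists (w :: Q), B; rewrite hrest /= hxw' hQ.
Qed.

Lemma ascent_from_Y1 B : maximal_ascent (n + 4) F (ones n ++ Y1) B ->
  exists C, B = (ones n ++ Y2) :: C /\ maximal_ascent (n + 4) F (ones n ++ Y2) C.
Proof.
case: B => [|v C] [hp hlm]; first by case: (ones_Y1_not_local_max hlm).
move: hp => /andP [/andP [hadj hlt] hp]; rewrite last_cons in hlm.
have hx := size_ones n.
have [w [a [b [c [d [hv hw [[wx hy] | [hyx hxw]]]]]]]] := @adjacent_cat4 _ _ Y1 _ hx erefl hadj.
  move: hlt; rewrite hv wx !fpoly_cat // ltrD2l count_ones => hlt.
  have hy2 := layerY1_ascent hM hn hy erefl hlt.
  by exists C; rewrite -wx -hy2 -hv.
exfalso; rewrite hyx in hv; move: hlt; rewrite hv !fpoly_cat //.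
have [i hi [_ hcw]] := count_flip (etrans hx (esym hw)) hxw.
rewrite hx in hi; rewrite nth_ones // in hcw.
rewrite (layer_shiftS _ _ (count id (ones n))%:Z (count id w)%:Z) hcw count_ones.
rewrite /slope /= b2iT b2iF.
by have := fpoly_oscillation hx hw; nia.
Qed.

Lemma ascent_from_Y2 x C : size x = n -> maximal_ascent (n + 4) F (x ++ Y2) C ->
  exists Q D, [/\ C = [seq v ++ Y2 | v <- Q] ++ (zeros n ++ Y3) :: D,
    path (step_down n) x Q, last x Q = zeros n /\ size Q = count id x
    & maximal_ascent (n + 4) F (zeros n ++ Y3) D].
Proof.
elim: C x => [|v C IH] x hx [hp hlm]; first by case: (Y2_not_local_max hx).
move: hp => /andP [/andP [hadj hlt] hp]; rewrite last_cons in hlm.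
have [w [a [b [c [d [hv hw [[wx hy] | [hyx hxw]]]]]]]] := @adjacent_cat4 _ x Y2 _ hx erefl hadj.
  move: hlt; rewrite hv wx !fpoly_cat // ltrD2l => hlt.
  have [hy3 hS] := layerY2_ascent hM hn (count_range hx) hy erefl hlt.
  have : count id x = 0%N by lia.
  move/count_eq0_nseq; rewrite hx -/(zeros n) => x0.
  by exists [::], C; split; rewrite /= ?x0 ?count_zeros // -x0 -wx -hy3 -hv.
rewrite hyx in hv; move: hlt; rewrite hv !fpoly_cat //.
have [i hi [hwi hcw]] := count_flip (etrans hx (esym hw)) hxw.
move: hwi hcw; case hxi: (nth false x i) => hwi hcw; last first.
  rewrite (layer_shiftS _ _ (count id x)%:Z (count id w)%:Z) hcw /slope /= b2iT b2iF.
  by have := fpoly_oscillation hx hw; nia.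
move=> _; have hstep : step_down n x w.
  by apply/existsP; rewrite hx in hi; exists (Ordinal hi); rewrite /= hxi hwi eqxx.
have hmw : maximal_ascent (n + 4) F (w ++ Y2) C by split; rewrite -hv.
have [Q [D [hC hQ [hlQ hsQ] hD]]] := IH w hw hmw.
by exists (w :: Q), D; split; rewrite /= ?hC ?hstep ?hQ //; split => //; lia.
Qed.

Lemma ascent_from_Y3 D : maximal_ascent (n + 4) F (zeros n ++ Y3) D ->
  exists E, D = (zeros n ++ Y4) :: E /\ maximal_ascent (n + 4) F (zeros n ++ Y4) E.
Proof.
case: D => [|v E] [hp hlm]; first by case: (zeros_Y3_not_local_max hlm).
move: hp => /andP [/andP [hadj hlt] hp]; rewrite last_cons in hlm.
have hx := size_zeros n.
have [w [a [b [c [d [hv hw [[wx hy] | [hyx hxw]]]]]]]] := @adjacent_cat4 _ _ Y3 _ hx erefl hadj.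
  move: hlt; rewrite hv wx !fpoly_cat // ltrD2l count_zeros => hlt.
  have hy4 := layerY3_ascent hM hn hy erefl hlt.
  by exists E; rewrite -wx -hy4 -hv.
exfalso; rewrite hyx in hv; move: hlt; rewrite hv !fpoly_cat //.
have [i hi [_ hcw]] := count_flip (etrans hx (esym hw)) hxw.
rewrite nth_zeros in hcw.
rewrite (layer_shiftS _ _ (count id (zeros n))%:Z (count id w)%:Z) hcw count_zeros.
rewrite /slope /= b2iT b2iF.
by have := fpoly_oscillation hx hw; nia.
Qed.

Lemma ascent_from_Y4 x E : size x = n -> maximal_ascent (n + 4) F (x ++ Y4) E ->
  exists Q, E = [seq v ++ Y4 | v <- Q] /\ maximal_ascent n f x Q.
Proof.
elim: E x => [|v E IH] x hx [hp hlm].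
  exists [::]; split => //; split => //.
  exact: (@local_max_face x Y4 hx erefl (slopeY4 _ _) hlm).
move: hp => /andP [/andP [hadj hlt] hp]; rewrite last_cons in hlm.
have [w [a [b [c [d [hv hw [[wx hy] | [hyx hxw]]]]]]]] := @adjacent_cat4 _ x Y4 _ hx erefl hadj.
  move: hlt; rewrite hv wx !fpoly_cat // ltrD2l ltNge.
  by rewrite (layerY4_no_ascent hM hn (count_range hx) hy erefl).
rewrite hyx in hv; move: hlt; rewrite hv !fpoly_cat // !(layer_flat _ 0 (slopeY4 _ _)).
rewrite ltrD2r => hlt.
have hxw' : ascent f x w by rewrite /ascent hlt andbT /adjacent hx hw hxw !eqxx.
have hmw : maximal_ascent (n + 4) F (w ++ Y4) E by split; rewrite -hv.
have [Q [hE [hQ hlQ]]] := IH w hw hmw.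
by exists (w :: Q); rewrite hE /maximal_ascent /= hxw' hQ.
Qed.

Lemma maximal_path_phases P : ends_at_ones k ->
  is_maximal_incr_path (n + 4) F P -> head [::] P = zeros (n + 4) ->
  exists Q1 Q3 Q5, [/\ P = [seq v ++ Y0 | v <- zeros n :: Q1]
      ++ [:: ones n ++ Y1; ones n ++ Y2] ++ [seq v ++ Y2 | v <- Q3]
      ++ [:: zeros n ++ Y3] ++ [seq v ++ Y4 | v <- zeros n :: Q5],
    path (ascent f) (zeros n) Q1 /\ last (zeros n) Q1 = ones n,
    [/\ path (step_down n) (ones n) Q3, last (ones n) Q3 = zeros n & size Q3 = n]
  & maximal_ascent n f (zeros n) Q5].
Proof.
move=> ends [[hne _ hsort] hlm].
case: P hne hsort hlm => [//|u rest] _ hsort hlm hu; rewrite /= in hu; subst u.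
have hmax : maximal_ascent (n + 4) F (zeros n ++ Y0) rest by split; rewrite -zeros_cat4.
have [Q1 [B [e1 hQ1 lQ1 hB]]] := ascent_from_Y0 (p0 := [::]) ends erefl erefl (size_zeros n) hmax.
have [C [e2 hC]] := ascent_from_Y1 hB.
have [Q3 [D [e3 hQ3 [lQ3 sQ3] hD]]] := ascent_from_Y2 (size_ones n) hC.
have [E [e4 hE]] := ascent_from_Y3 hD.
have [Q5 [e5 hQ5]] := ascent_from_Y4 (size_zeros n) hE.
exists Q1, Q3, Q5; split => //; last by rewrite sQ3 count_ones.
by rewrite zeros_cat4 e1 e2 e3 e4 e5.
Qed.

End Phases.

Lemma ends_at_ones0 : ends_at_ones 0.
Proof.
move=> [|a p] [[_ hall _] hlm] _ //.
have : size (last a p) == cubedim 0 by move/allP: hall; apply; rewrite mem_last.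
move: hlm; rewrite /= => hlm.
case: (last a p) hlm => [|[] [|[] [|]]] // hlm _.
- by have := hlm [:: true; true] erefl erefl.
- by have := hlm [:: true; true] erefl erefl.
- by have := hlm [:: true; false] erefl erefl.
Qed.

Lemma ends_at_ones_all k : ends_at_ones k.
Proof.
elim: k => [|k IH]; first exact: ends_at_ones0.
move=> p; rewrite cubedimS => hmax hhead.
have [Q1 [Q3 [Q5 [-> _ _ [hQ5 lQ5]]]]] := maximal_path_phases IH hmax hhead.
have := IH (zeros _ :: Q5) (conj (is_incr_path_cons (size_zeros _) hQ5) lQ5) erefl.
by rewrite !last_cat /= (last_map (cat^~ Y4)) => ->; rewrite ones_cat4.
Qed.

Theorem mainTheorem5 (k : nat) (P : seq (seq bool)) :
  let n := cubedim k in
  is_maximal_incr_path (n + 4) (fpoly k.+1) P ->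
  head [::] P = zeros (n + 4) ->
  exists (Q1 Q3 Q5 : seq (seq bool)),
    [/\ P = [seq x ++ [:: false; false; false; false] | x <- Q1]
            ++ [:: ones n ++ [:: true; false; false; false];
                   ones n ++ [:: true; true; false; false]]
            ++ [seq x ++ [:: true; true; false; false] | x <- Q3]
            ++ [:: zeros n ++ [:: true; true; true; false]]
            ++ [seq x ++ [:: true; true; true; true] | x <- Q5],
        (* (i) *)
        is_incr_path n (fpoly k) Q1 /\ head [::] Q1 = zeros n /\ last [::] Q1 = ones n,
        (* (iii) *)
        size Q3 = n /\ sorted (step_down n) (ones n :: Q3) /\ last (ones n) Q3 = zeros n
      & (* (iv)-(v) *)
        is_maximal_incr_path n (fpoly k) Q5 /\ head [::] Q5 = zeros n].
Proof.
move=> n hmax hhead.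
have [Q1 [Q3 [Q5 [-> [hQ1 lQ1] [hQ3 lQ3 sQ3] [hQ5 lQ5]]]]] :=
  maximal_path_phases (@ends_at_ones_all k) hmax hhead.
exists (zeros n :: Q1), Q3, (zeros n :: Q5); split => //.
- by split; first exact: is_incr_path_cons (size_zeros n) hQ1.
- by split; first split; first exact: is_incr_path_cons (size_zeros n) hQ5.
Qed.
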